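(* Let $H\in\mathbb{R}^{n\times n}$ be symmetric with $\lambda_1:=\lambda_{\min}(H)<0$ and unit eigenvector $v_1$, and let $g\in\mathbb{R}^n$ with $g^{(1)}:=g^\intercal v_1\neq 0$. For $a\in\mathbb{R}^n$ write $a^{(1)}=a^\intercal v_1$. Let $\eta>0$ and $z_0=-\alpha\frac{g}{\|g\|}$ with $0<\alpha<1$, and consider the phase I iteration $z_{t+1}=z_t-\eta(Hz_t+g)$ of Algorithm 1. Then phase I terminates, i.e. there is an index $T_1\ge 0$ with $\|z_t\|<1$ for all $t\le T_1$ and $\|z_{T_1+1}\|\ge 1$, and $$T_1\le \frac{1}{\log(1-\eta\lambda_1)}\Big[\log\Big(\frac{1}{\eta|g^{(1)}|}-\frac{1}{\eta\lambda_1}\Big)-\log\Big(\frac{-z_0^{(1)}}{\eta g^{(1)}}-\frac{1}{\eta\lambda_1}\Big)\Big].$$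
   Context: Algorithm 1 solves $\min_{\|z\|_2\le1}\frac12 z^\intercal Hz+g^\intercal z$; its phase I starts from $z_0$ and performs plain gradient steps $z_{t+1}=z_t-\eta(Hz_t+g)$ while $\|z_t\|<1$; $T_1$ denotes the number of phase I iterations as specified in the claim. *)

From HB Require Import structures.
From mathcomp Require Import all_boot all_order all_algebra.
From mathcomp Require Import all_classical all_reals all_analysis.
Set Implicit Arguments. Unset Strict Implicit. Unset Printing Implicit Defensive.
Import Order.TTheory GRing.Theory Num.Theory.
Local Open Scope ring_scope.

Section Defs.
Variables (R : realType) (n : nat).

Definition dotv (u v : 'cV[R]_n) : R := \sum_(i < n) u i 0 * v i 0.
Definition norm2 (u : 'cV[R]_n) : R := Num.sqrt (dotv u u).

Definition is_eigenvalue (H : 'M[R]_n) (lam : R) : Prop :=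
  exists v : 'cV[R]_n, v != 0 /\ H *m v = lam *: v.

Definition is_lambda_min (H : 'M[R]_n) (lam : R) : Prop :=
  is_eigenvalue H lam /\ forall mu, is_eigenvalue H mu -> lam <= mu.

Fixpoint phase1 (H : 'M[R]_n) (g : 'cV[R]_n) (eta : R) (z0 : 'cV[R]_n)
    (t : nat) : 'cV[R]_n :=
  match t with
  | 0%N => z0
  | t'.+1 => let z := phase1 H g eta z0 t' in z - eta *: (H *m z + g)
  end.
End Defs.

From HB Require Import structures.
From mathcomp Require Import all_boot all_order all_algebra.
From mathcomp Require Import all_classical all_reals all_analysis.
From mathcomp Require Import ring lra.
Import Order.TTheory GRing.Theory Num.Theory.
Set Implicit Arguments. Unset Strict Implicit.
Local Open Scope ring_scope.

(* Along the eigenvector [v1] the iteration decouples: the coordinate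
   [x_t = <z_t, v1>] obeys the affine recursion [x_(t+1) = q x_t - eta g1] with
   [q = 1 - eta lam1 > 1], so its distance to the fixed point grows like [q^t].
   Since [|x_t| <= |z_t|], the norm eventually reaches 1, and as long as it stays
   below 1 the factor [q^t] is bounded, which bounds the exit time by a
   logarithm. *)

Section InnerProduct.
Variables (R : realType) (n : nat).
Implicit Types (u v w : 'cV[R]_n).

Lemma dotvC u v : dotv u v = dotv v u.
Proof. by apply: eq_bigr => i _; rewrite mulrC. Qed.

Lemma dotvDl u w v : dotv (u + w) v = dotv u v + dotv w v.
Proof. by rewrite /dotv -big_split; apply: eq_bigr => i _; rewrite !mxE mulrDl. Qed.

Lemma dotvZl k u v : dotv (k *: u) v = k * dotv u v.
Proof. by rewrite /dotv mulr_sumr; apply: eq_bigr => i _; rewrite !mxE mulrA. Qed.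

Lemma dotvBl u w v : dotv (u - w) v = dotv u v - dotv w v.
Proof. by rewrite -scaleN1r dotvDl dotvZl mulN1r. Qed.

Lemma dotvZr k u v : dotv u (k *: v) = k * dotv u v.
Proof. by rewrite dotvC dotvZl dotvC. Qed.

Lemma dotvBr u w v : dotv v (u - w) = dotv v u - dotv v w.
Proof. by rewrite !(dotvC v) dotvBl. Qed.

Lemma dotvv_ge0 u : 0 <= dotv u u.
Proof. by apply: sumr_ge0 => i _; rewrite -expr2 sqr_ge0. Qed.

Lemma sqr_norm2 u : norm2 u ^+ 2 = dotv u u.
Proof. exact/sqr_sqrtr/dotvv_ge0. Qed.

Lemma norm2Z k u : norm2 (k *: u) = `|k| * norm2 u.
Proof. by rewrite /norm2 dotvZl dotvZr mulrA -expr2 sqrtrM ?sqr_ge0 ?sqrtr_sqr. Qed.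

(* Cauchy-Schwarz against a unit vector, from [0 <= |u - <u,v> v|^2]. *)
Lemma dotv_le_norm2 u v : norm2 v = 1 -> `|dotv u v| <= norm2 u.
Proof.
move=> v_unit; have vv : dotv v v = 1 by rewrite -sqr_norm2 v_unit expr1n.
rewrite /norm2 -sqrtr_sqr; apply: ler_wsqrtr.
have := dotvv_ge0 (u - dotv u v *: v).
rewrite dotvBl !dotvBr !dotvZl !dotvZr vv (dotvC v u); lra.
Qed.

Lemma dotv_mulmx_eigen (H : 'M[R]_n) (lam : R) u v :
  H^T = H -> H *m v = lam *: v -> dotv (H *m u) v = lam * dotv u v.
Proof.
have dotvE w w' : dotv w w' = (w^T *m w') 0 0.
  by rewrite /dotv mxE; apply: eq_bigr => i _; rewrite mxE.
by move=> HT Hv; rewrite !dotvE trmx_mul -mulmxA HT Hv -scalemxAr mxE.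
Qed.

End InnerProduct.

Lemma affine_recurrenceE (R : pzRingType) (x : nat -> R) (q p : R) :
  (forall t, x t.+1 = q * x t + (1 - q) * p) ->
  forall t, x t = q ^+ t * (x 0%N - p) + p.
Proof.
move=> x_succ; elim=> [|t IH]; first by rewrite expr0 mul1r subrK.
by rewrite x_succ IH exprS mulrDr mulrA mulrBl mul1r -addrA [q * p + _]addrC subrK.
Qed.

Lemma first_exit (P : pred nat) :
  ~~ P 0%N -> (exists t, P t) ->
  exists T, (forall t, (t <= T)%N -> ~~ P t) /\ P T.+1.
Proof.
move=> P0 exP; case: (ex_minnP exP) => m Pm m_min.
have [T mE] : exists T, m = T.+1.
  by case: m Pm {m_min} => [/negP|T _]; [rewrite (negPf P0)|exists T].
subst m; exists T; split=> // t tT.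
by apply/negP => /m_min; rewrite leqNgt ltnS tT.
Qed.

Section GeometricGrowth.
Variables (R : realType) (q c X : R).
Hypotheses (q_gt1 : 1 < q) (c_gt0 : 0 < c) (X_gt0 : 0 < X).

Lemma geometric_le_ln (t : nat) :
  (q ^+ t * c <= X) = (t%:R <= (ln q)^-1 * (ln X - ln c)).
Proof.
have q_gt0 : 0 < q := lt_trans ltr01 q_gt1.
rewrite -ler_ln ?posrE ?mulr_gt0 ?exprn_gt0 // lnM ?posrE ?exprn_gt0 // lnXn //.
by rewrite ler_pdivlMl ?ln_gt0 // -lerBrDr mulr_natr.
Qed.

Lemma exists_geometric_gt : exists t, X < q ^+ t * c.
Proof.
exists (Num.truncn ((ln q)^-1 * (ln X - ln c))).+1.
by rewrite ltNge geometric_le_ln -ltNge truncnS_gt.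
Qed.

End GeometricGrowth.

Section PhaseOne.
Variables (R : realType) (n : nat) (H : 'M[R]_n) (g v1 z0 : 'cV[R]_n) (lam eta : R).
Hypotheses (H_sym : H^T = H) (Hv1 : H *m v1 = lam *: v1).

Local Notation z := (phase1 H g eta z0).
Local Notation g1 := (dotv g v1).
Local Notation q := (1 - eta * lam).
Local Notation c := (- dotv z0 v1 / (eta * g1) - (eta * lam)^-1).
Local Notation X := ((eta * `|g1|)^-1 - (eta * lam)^-1).

Lemma phase1_coord_succ t :
  dotv (z t.+1) v1 = q * dotv (z t) v1 - eta * g1.
Proof.
by rewrite /= dotvBl dotvZl dotvDl (dotv_mulmx_eigen _ H_sym Hv1); ring.
Qed.

Hypotheses (lam_neq0 : lam != 0) (eta_gt0 : 0 < eta) (g1_neq0 : g1 != 0).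

(* The coordinate along [v1] is an affine recursion with fixed point [- g1 / lam]. *)
Lemma phase1_coordE t :
  dotv (z t) v1 = - (eta * g1) * (q ^+ t * c + (eta * lam)^-1).
Proof.
have eta_neq0 : eta != 0 by rewrite gt_eqF.
rewrite (@affine_recurrenceE _ (fun t => dotv (z t) v1) q (- g1 / lam)).
- by rewrite /=; field; rewrite eta_neq0 lam_neq0 g1_neq0.
- by move=> s; rewrite phase1_coord_succ; field.
Qed.

Lemma phase1_norm2_ge :
  norm2 v1 = 1 -> forall t, eta * `|g1| * (q ^+ t * c - X) + 1 <= norm2 (z t).
Proof.
move=> v1_unit t; apply: le_trans (dotv_le_norm2 _ v1_unit).
have eg1_gt0 : 0 < eta * `|g1| by rewrite mulr_gt0 ?normr_gt0.
rewrite phase1_coordE normrM normrN normrM (gtr0_norm eta_gt0).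
apply: le_trans (ler_wpM2l (ltW eg1_gt0) (ler_norm _)).
by rewrite mulrBr [X in _ - X]mulrBr mulfV ?gt_eqF // opprB addrA subrK [leRHS]mulrDr.
Qed.

End PhaseOne.

Theorem lemma2 (R : realType) (n : nat) (H : 'M[R]_n) (g v1 : 'cV[R]_n)
    (lam1 eta alpha : R) :
  H^T = H ->
  is_lambda_min H lam1 -> lam1 < 0 ->
  H *m v1 = lam1 *: v1 -> norm2 v1 = 1 ->
  dotv g v1 != 0 ->
  0 < eta -> 0 < alpha -> alpha < 1 ->
  let z0 := (- (alpha / norm2 g)) *: g in
  let z := phase1 H g eta z0 in
  let g1 := dotv g v1 in
  exists T1 : nat,
    (forall t : nat, (t <= T1)%N -> norm2 (z t) < 1) /\
    1 <= norm2 (z T1.+1) /\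
    T1%:R <= (ln (1 - eta * lam1))^-1 *
      (ln ((eta * `|g1|)^-1 - (eta * lam1)^-1)
       - ln (- dotv z0 v1 / (eta * g1) - (eta * lam1)^-1)).
Proof.
move=> H_sym _ lam1_lt0 Hv1 v1_unit g1_neq0 eta_gt0 alpha_gt0 alpha_lt1 z0 z g1.
have norm_g_gt0 : 0 < norm2 g.
  by apply: lt_le_trans (dotv_le_norm2 g v1_unit); rewrite normr_gt0.
have elam_lt0 : eta * lam1 < 0 by rewrite pmulr_rlt0.
have q_gt1 : 1 < 1 - eta * lam1 by rewrite ltrDl oppr_gt0.
have c_gt0 : 0 < - dotv z0 v1 / (eta * g1) - (eta * lam1)^-1.
  have -> : - dotv z0 v1 / (eta * g1) = alpha / (eta * norm2 g).
    by rewrite /z0 /g1 dotvZl; field; rewrite g1_neq0 !gt_eqF.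
  by rewrite subr_gt0; apply: lt_trans (_ : 0 < _); rewrite ?invr_lt0 // divr_gt0 ?mulr_gt0.
have X_gt0 : 0 < (eta * `|g1|)^-1 - (eta * lam1)^-1.
  rewrite subr_gt0; apply: lt_trans (_ : 0 < _).
  - by rewrite invr_lt0.
  - by rewrite invr_gt0 mulr_gt0 ?normr_gt0.
have lam1_neq0 : lam1 != 0 by rewrite lt_eqF.
have norm_ge := phase1_norm2_ge z0 H_sym Hv1 lam1_neq0 eta_gt0 g1_neq0 v1_unit.
have z0_inside : ~~ (1 <= norm2 (z 0%N)).
  by rewrite -ltNge /= /z0 norm2Z normrN gtr0_norm ?divr_gt0 ?divfK ?gt_eqF.
have [t exit_t] : exists t, 1 <= norm2 (z t).
  have [t Xlt] := exists_geometric_gt q_gt1 c_gt0 X_gt0.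
  exists t; apply: le_trans (norm_ge t).
  by rewrite lerDr mulr_ge0 ?subr_ge0 ?ltW ?mulr_gt0 ?normr_gt0.
have [T [inside exit]] :=
  @first_exit (fun t => 1 <= norm2 (z t)) z0_inside (ex_intro _ t exit_t).
exists T; split=> [s /inside|]; first by rewrite -ltNge.
split=> //; rewrite -geometric_le_ln //; apply: ltW.
have zT_lt1 : norm2 (z T) < 1 by rewrite ltNge inside.
have := le_lt_trans (norm_ge T) zT_lt1.
by rewrite gtrDr pmulr_rlt0 ?mulr_gt0 ?normr_gt0 // subr_lt0.
Qed.
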